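(* Let $p$ be a prime, $T=\mathbb{Z}(p^\infty)$ the Prüfer $p$-group, and $A$ a countable unbounded reduced $p$-group. Then $\boldsymbol\Pi^0_3$ is the complexity class of $\{0\}$ in $\mathrm{Hom}(T,E_\omega(A))$.
   Context: $L_\omega(A)=\varprojlim_{n<\omega}A/p^nA$ (the $p$-adic completion, a Polish group), $\kappa:A\to L_\omega(A)$ canonical, $E_\omega(A)=L_\omega(A)/\kappa(A)$, a group with a Polish cover (Polish group modulo a Polishable subgroup, i.e. the image of a continuous homomorphism from a Polish group). For a countable group $T$ and $G=\hat G/N$, $\mathrm{Hom}(T,G)$ is the group of homomorphisms $T\to G$, presented as $\hat H/N_H$: $\hat H$ is the Polish group of maps $\varphi:T\to\hat G$ with $\varphi(0)=0$ and $\varphi(a+b)-\varphi(a)-\varphi(b)\in N$, where $\varphi_i\to\varphi$ iff $(\varphi_i-\varphi)(a)\to0$ in $\hat G$ and $(\varphi_i-\varphi)(a+b)-(\varphi_i-\varphi)(a)-(\varphi_i-\varphi)(b)\to0$ in $N$ (with its Polish topology) for all $a,b$; $N_H=\{\varphi:\varphi(T)\subseteq N\}$. $\boldsymbol\Pi^0_3$ is the complexity class of $\{0\}$ if $N_H$ is $\boldsymbol\Pi^0_3$ but not $\boldsymbol\Sigma^0_3$ in $\hat H$. *)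

From HB Require Import structures.
From mathcomp Require Import all_boot all_order all_algebra.
From mathcomp Require Import boolp classical_sets.
Set Implicit Arguments. Unset Strict Implicit. Unset Printing Implicit Defensive.
Import Order.TTheory GRing.Theory Num.Theory.
Local Open Scope classical_set_scope.
Local Open Scope ring_scope.

Section Groups.
Variable A : zmodType.

Definition is_p_group (p : nat) : Prop :=
  forall a : A, exists k : nat, a *+ (p ^ k)%N = 0.

Definition is_bounded : Prop :=
  exists n : nat, (0 < n)%N /\ forall a : A, a *+ n = 0.

Definition is_subgroup (D : set A) : Prop :=
  D 0 /\ forall x y, D x -> D y -> D (x - y).

Definition is_divisible_subset (D : set A) : Prop :=
  forall d, D d -> forall n : nat, (0 < n)%N -> exists2 e, D e & e *+ n = d.

Definition is_reduced : Prop :=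
  forall D : set A, is_subgroup D -> is_divisible_subset D -> D `<=` [set 0].
End Groups.

(* The Pruefer p-group Z(p^oo) = Z[1/p]/Z, represented by the rationals *)
(* in [0,1) whose denominator is a power of p, with addition mod 1.     *)
Definition in_prufer (p : nat) (q : rat) : Prop :=
  0 <= q /\ q < 1 /\ exists k : nat, denq q = ((p ^ k)%N)%:Z.

Definition prufer_add (q r : rat) : rat :=
  if q + r < 1 then q + r else q + r - 1.

(* L_omega(A) = lim A/p^n A, elements are compatible families of cosets *)
Section Completion.
Variables (A : zmodType) (p : nat).

Definition pmulA (n : nat) : set A := [set a | exists b : A, a = b *+ (p ^ n)%N].
Definition cosetA (n : nat) (x : A) : set A := [set a | pmulA n (a - x)].

Definition Lcar := nat -> set A.

Definition isL (c : Lcar) : Prop :=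
  (forall n, exists x : A, c n = cosetA n x) /\ (forall n, c n.+1 `<=` c n).

Definition Lzero : Lcar := fun n => pmulA n.
Definition Lsub (c d : Lcar) : Lcar :=
  fun n => [set a | exists x y, c n x /\ d n y /\ a = x - y].

Definition kappa (a : A) : Lcar := fun n => cosetA n a.

(* hat H = { phi : T -> L_omega(A) | phi 0 = 0, cocycles in kappa(A) } ;
   phi is encoded on all of rat and required to be 0 off T. *)
Definition Hcar := rat -> Lcar.

Definition cocycle (phi : Hcar) (q r : rat) : Lcar :=
  Lsub (Lsub (phi (prufer_add q r)) (phi q)) (phi r).

Definition HatH : set Hcar :=
  [set phi | (forall q, in_prufer p q -> isL (phi q)) /\
             (forall q, ~ in_prufer p q -> phi q = Lzero) /\
             phi 0 = Lzero /\
             (forall q r, in_prufer p q -> in_prufer p r ->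
                 exists a : A, cocycle phi q r = kappa a)].

Definition NH : set Hcar :=
  [set phi | HatH phi /\ forall q, in_prufer p q -> exists a : A, phi q = kappa a].

(* Subbasis of the Polish topology of hat H: the initial topology for the
   evaluations phi |-> phi(q) into L_omega(A) (product of the discrete
   groups A/p^nA) and the cocycle maps phi |-> phi(q+r)-phi(q)-phi(r)
   into N = kappa(A) with its Polish (= discrete, N being countable)
   topology. *)
Definition Hsubbasis : set (set Hcar) :=
  [set U | (exists q n x, in_prufer p q /\ U = [set phi | phi q n = cosetA n x]) \/
           (exists q r a, in_prufer p q /\ in_prufer p r /\
                          U = [set phi | cocycle phi q r = kappa a])].
End Completion.

Arguments HatH : clear implicits.
Arguments NH : clear implicits.
Arguments Hsubbasis : clear implicits.

Section Borel.
Variables (X : Type) (B : set (set X)) (Y : set X).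

Definition gen_open (U : set X) : Prop :=
  U `<=` Y /\
  forall x, U x -> exists s : seq (set X),
      (forall V, V \in s -> B V /\ V x) /\
      (Y `&` [set y | forall V, V \in s -> V y]) `<=` U.

(* SigmaS n = Sigma^0_(n+1) *)
Fixpoint SigmaS (n : nat) : set X -> Prop :=
  match n with
  | 0 => gen_open
  | m.+1 => fun U => exists F : nat -> set X,
              (forall k, F k `<=` Y /\ SigmaS m (Y `\` F k)) /\
              U = \bigcup_k F k
  end.

(* Sigma^0_n and Pi^0_n for n >= 1 *)
Definition Sigma0 (n : nat) (U : set X) : Prop := SigmaS n.-1 U.
Definition Pi0 (n : nat) (U : set X) : Prop := U `<=` Y /\ Sigma0 n (Y `\` U).
End Borel.

(* Upper bound: phi lies in N_H iff for every q in T there is an a in A with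
   phi(q) = kappa(a), and each set {phi | phi(q) = kappa(a)} is closed.

   Lower bound: since A is an unbounded reduced p-group there are e_i in A with
   p^(i+1) e_i in p^omega A but p^i e_i not in p^omega A.  A 0-1 matrix x
   (rows j, columns i) is sent continuously to the cocycle phi_x with
   phi_x(N/p^K) = N * sum_(i >= K) c_i p^(i+1-K) e_i, where
   c_i = sum_(j < i) x_(j,i) p^j reads column i above the diagonal in base p.
   If every row of x is eventually zero then c_i is eventually divisible by
   p^K, the tail of the series lies in p^omega A, and phi_x(T) is inside
   kappa(A).  Flipping the bit x_(k,i), k < i, moves phi_x(1/p^(k+1)) by
   p^i e_i, which is not in p^omega A.  So the closed sets
   E_(k,a) = {x | phi_x(1/p^(k+1)) = kappa(a)} cover, for each fixed k, the
   preimage P of N_H, and none of them contains both flips of a bit in row k.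
   If N_H were Sigma^0_3, P would be a countable union of G_delta sets G_k; a
   Baire category argument that settles the rows of the matrix one at a time
   produces a matrix with eventually zero rows outside every G_k, although
   such matrices lie in P. *)

From HB Require Import structures.
From mathcomp Require Import all_boot all_order all_algebra.
From mathcomp Require Import boolp classical_sets.
From mathcomp Require Import ring lra zify.
Set Implicit Arguments. Unset Strict Implicit. Unset Printing Implicit Defensive.
Import Order.TTheory GRing.Theory Num.Theory.
Local Open Scope classical_set_scope.
Local Open Scope ring_scope.

Section SigmaHierarchy.
Variables (X : Type) (B : set (set X)) (Y : set X).

Lemma gen_open_set0 : gen_open B Y set0.
Proof. by split=> // x. Qed.

Lemma gen_open_Y : gen_open B Y Y.
Proof. by split=> // x _; exists [::]; split=> // y []. Qed.

Lemma SigmaS_set0_Y m : SigmaS B Y m set0 /\ SigmaS B Y m Y.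
Proof.
elim: m => [|m [S0 SY]]; first by split; [exact: gen_open_set0 | exact: gen_open_Y].
split.
- exists (fun=> set0); split; first by move=> k; rewrite setD0; split=> // x.
  by apply/seteqP; split=> x // [].
- exists (fun=> Y); split; first by move=> k; rewrite setDv; split.
  by apply/seteqP; split=> x; [exists 0%N | case].
Qed.

Lemma SigmaS_bigcup m (I : countType) (F : I -> set X) :
  (forall i, F i `<=` Y /\ SigmaS B Y m (Y `\` F i)) ->
  SigmaS B Y m.+1 (\bigcup_i F i).
Proof.
move=> hF; exists (fun k => if unpickle k is Some i then F i else set0); split.
  move=> k; case: (unpickle k) => [i|//]; first exact: hF.
  by rewrite setD0; split=> //; exact: (SigmaS_set0_Y m).2.
apply/seteqP; split=> [x [i _ Fx]|x [k _]].
  by exists (pickle i) => //; rewrite pickleK.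
by case: (unpickle k) => // i Fx; exists i.
Qed.

End SigmaHierarchy.

Section PowerMultiples.
Variables (A : zmodType) (p : nat).

Lemma pmulA0 n : pmulA p n (0 : A).
Proof. by exists 0; rewrite mul0rn. Qed.

Lemma pmulAD n (a b : A) : pmulA p n a -> pmulA p n b -> pmulA p n (a + b).
Proof. by move=> [c ->] [d ->]; exists (c + d); rewrite mulrnDl. Qed.

Lemma pmulAN n (a : A) : pmulA p n a -> pmulA p n (- a).
Proof. by move=> [c ->]; exists (- c); rewrite mulNrn. Qed.

Lemma pmulAB n (a b : A) : pmulA p n a -> pmulA p n b -> pmulA p n (a - b).
Proof. by move=> ha hb; apply/pmulAD/pmulAN. Qed.

Lemma pmulAMn n (a : A) m : pmulA p n a -> pmulA p n (a *+ m).
Proof. by move=> [c ->]; exists (c *+ m); rewrite -!mulrnA mulnC. Qed.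

Lemma pmulA_dvdn n (a : A) m : (p ^ n %| m)%N -> pmulA p n (a *+ m).
Proof. by move=> /dvdnP [k ->]; exists (a *+ k); rewrite mulrnA. Qed.

Lemma pmulAW m n (a : A) : (m <= n)%N -> pmulA p n a -> pmulA p m a.
Proof.
move=> lemn [c ->]; rewrite -(subnK lemn) expnD mulrnA.
by apply: pmulA_dvdn; rewrite dvdnn.
Qed.

Lemma pmulA_sum n (I : Type) (r : seq I) (P : pred I) (F : I -> A) :
  (forall i, P i -> pmulA p n (F i)) -> pmulA p n (\sum_(i <- r | P i) F i).
Proof. by move=> hF; elim/big_ind: _ => //; [exact: pmulA0 | exact: pmulAD]. Qed.

Definition pomega (a : A) := forall n, pmulA p n a.

Lemma cosetA_eq n (a b : A) : cosetA p n a = cosetA p n b <-> pmulA p n (a - b).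
Proof.
split=> [eq_ab|ab].
  have : cosetA p n a a by rewrite /cosetA /= subrr; exact: pmulA0.
  by rewrite eq_ab.
apply/seteqP; split=> x /= hx.
  by have := pmulAD hx ab; rewrite addrA subrK.
by have := pmulAB hx ab; rewrite opprB addrA subrK.
Qed.

Definition Lseq (w : nat -> A) : Lcar A := fun n => cosetA p n (w n).

Lemma Lseq_eq w w' : Lseq w = Lseq w' <-> forall n, pmulA p n (w n - w' n).
Proof.
split=> [eq_w n|hw]; last by apply: funext => n; apply/cosetA_eq.
by apply/cosetA_eq; exact: (congr1 (fun c => c n) eq_w).
Qed.

Lemma kappa_Lseq a : kappa p a = Lseq (fun=> a).
Proof. by []. Qed.

Lemma Lzero_Lseq : @Lzero A p = Lseq (fun=> 0).
Proof.
apply: funext => n; rewrite /Lzero /Lseq /cosetA.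
by apply/seteqP; split=> x /=; rewrite subr0.
Qed.

Lemma Lsub_Lseq w w' : Lsub (Lseq w) (Lseq w') = Lseq (fun n => w n - w' n).
Proof.
apply: funext => n; apply/seteqP; split=> a /=.
  move=> [x [y [hx [hy ->]]]]; move: hx hy; rewrite /Lseq /cosetA /=.
  suff -> : x - y - (w n - w' n) = x - w n - (y - w' n) by exact: pmulAB.
  by rewrite !opprB addrACA [RHS]addrACA (addrC (- y)).
rewrite /Lseq /cosetA /= => ha; exists (a + w' n), (w' n); split; last split.
- by rewrite opprB addrA in ha.
- by rewrite /= subrr; exact: pmulA0.
- by rewrite addrK.
Qed.

Lemma isL_Lseq w : (forall n, pmulA p n (w n.+1 - w n)) -> isL p (Lseq w).
Proof.
move=> hw; split=> [n|n x]; first by exists (w n).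
move=> /(pmulAW (leqnSn n)) /pmulAD /(_ (hw n)).
by rewrite /cosetA /= addrA subrK.
Qed.

End PowerMultiples.

Section UpperBound.
Variables (p : nat) (A : countZmodType).
Local Notation Y := (HatH A p).
Local Notation B := (Hsubbasis A p).

Lemma gen_open_neq_kappa q a :
  gen_open B Y [set phi | Y phi /\ in_prufer p q /\ phi q <> kappa p a].
Proof.
split=> [phi [] //|phi [Yphi [Tq neq]]].
have [n [x [phi_n neq_n]]] :
    exists n x, phi q n = cosetA p n x /\ phi q n <> kappa p a n.
  have [phi_coset _] := Yphi.1 q Tq.
  apply: contra_notP neq => eq_n; apply: funext => n.
  have [x phi_n] := phi_coset n.
  by apply: contra_notP eq_n => neq_n; exists n, x.
exists [:: [set psi | psi q n = cosetA p n x]]; split.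
  by move=> V; rewrite inE => /eqP ->; split=> //; left; exists q, n, x.
move=> psi [Ypsi /(_ _ (mem_head _ _)) /= psi_n]; do 2!split=> //.
by move=> eq_psi; apply: neq_n; rewrite phi_n -psi_n eq_psi.
Qed.

Lemma NH_Pi03 : Pi0 B Y 3 (NH A p).
Proof.
split=> [phi [] //|]; rewrite /Sigma0.
pose F q := [set phi | Y phi /\ in_prufer p q /\ forall a, phi q <> kappa p a].
have -> : Y `\` NH A p = \bigcup_q F q.
  apply/seteqP; split=> [phi [Yphi notNH]|phi [q _ [Yphi [Tq neq]]]].
    have [q [Tq neq]] : exists q, in_prufer p q /\ ~ exists a, phi q = kappa p a.
      apply: contra_notP notNH => hq; split=> // q Tq.
      by apply: contra_notP hq => ?; exists q.
    by exists q => //; do 2!split=> //; move=> a eq_a; apply: neq; exists a.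
  by split=> // -[_ /(_ q Tq) [a /neq]].
apply: (SigmaS_bigcup (m := 1)) => q; split=> [phi [] //|].
pose G a := [set phi | Y phi /\ (in_prufer p q -> phi q = kappa p a)].
have -> : Y `\` F q = \bigcup_a G a.
  apply/seteqP; split=> [phi [Yphi notF]|phi [a _ [Yphi eq_a]]].
    have [a eq_a] : exists a, in_prufer p q -> phi q = kappa p a.
      have [Tq|notTq] := pselect (in_prufer p q); last by exists 0.
      apply: contra_notP notF => neq; do 2!split=> //.
      by move=> a eq_a; apply: neq; exists a.
    by exists a.
  by split=> // -[_ [Tq /(_ a)]]; apply; exact: eq_a.
apply: (SigmaS_bigcup (m := 0)) => a; split=> [phi [] //|] /=.
have -> : Y `\` G a = [set phi | Y phi /\ in_prufer p q /\ phi q <> kappa p a].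
  apply/seteqP; split=> [phi [Yphi notG]|phi [Yphi [Tq neq]]].
    have [Tq|notTq] := pselect (in_prufer p q); last by exfalso; apply: notG.
    by do 2!split=> //; move=> eq_a; apply: notG.
  by split=> // -[_ /(_ Tq)].
exact: gen_open_neq_kappa.
Qed.

End UpperBound.

Definition grid := nat -> nat -> bool.

Section Grids.
Local Open Scope nat_scope.

Definition agree (M : nat) (x y : grid) :=
  forall j i, j < M -> i < M -> x j i = y j i.
Definition grid_open (O : set grid) :=
  forall x, O x -> exists M, forall y, agree M x y -> O y.
Definition grid_closed (E : set grid) := grid_open (~` E).

Definition set_bit (x : grid) k i b : grid :=
  fun j i' => if (j == k) && (i' == i) then b else x j i'.
Definition same_rows k (w x : grid) := forall j i, j < k -> x j i = w j i.
Definition finite_rows (x : grid) :=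
  forall j, exists n, forall i, n <= i -> x j i = false.

Definition grid_limit (w : nat -> grid) : grid := fun j i => w (maxn j i).+1 j i.

Lemma same_rows_trans k w x y : same_rows k w x -> same_rows k x y -> same_rows k w y.
Proof. by move=> wx xy j i hj; rewrite xy // wx. Qed.

Lemma agree_trans M x y z : agree M x y -> agree M y z -> agree M x z.
Proof. by move=> xy yz j i hj hi; rewrite xy // yz. Qed.

Lemma agreeW M M' x y : M <= M' -> agree M' x y -> agree M x y.
Proof. by move=> le xy j i hj hi; apply: xy; apply: leq_trans le. Qed.

Lemma agree_chain (w : nat -> grid) (M : nat -> nat) :
  (forall n, M n <= M n.+1) -> (forall n, agree (M n) (w n) (w n.+1)) ->
  forall n l, n <= l -> M n <= M l /\ agree (M n) (w n) (w l).
Proof.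
move=> leM agw n l.
apply: (homo_leq (r := fun s t => s.2 <= t.2 /\ agree s.2 s.1 t.1)
          (f := fun n => (w n, M n))) => [[x m]|[y m2] [x m1] [z m3] /=|i].
- by split=> // j i.
- move=> [le12 xy] [le23 yz]; split; first exact: leq_trans le23.
  by apply: agree_trans xy _; apply: agreeW yz.
- exact: conj (leM i) (agw i).
Qed.

Lemma agree_limit (w : nat -> grid) (M : nat -> nat) :
  (forall n, n <= M n) -> (forall n, M n <= M n.+1) ->
  (forall n, agree (M n) (w n) (w n.+1)) ->
  forall n, agree (M n) (w n) (grid_limit w).
Proof.
move=> geM leM agw n j i hj hi; rewrite /grid_limit; set m := (maxn j i).+1.
have [le_nm|lt_mn] := leqP n m; first exact: (agree_chain leM agw le_nm).2.
have [jm im] : j < M m /\ i < M m.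
  by rewrite !(leq_trans _ (geM m)) // ltnS ?leq_maxl ?leq_maxr.
by symmetry; apply: (agree_chain leM agw (ltnW lt_mn)).2.
Qed.

Lemma same_rows_chain (w : nat -> grid) :
  (forall n, same_rows n (w n) (w n.+1)) ->
  forall n l, n <= l -> same_rows n (w n) (w l).
Proof.
move=> sw n l le_nl.
apply: (proj2 (homo_leq (r := fun s t => s.1 <= t.1 /\ same_rows s.1 s.2 t.2)
          (f := fun n => (n, w n)) _ _ _ le_nl)) => [[m x]|[m2 y] [m1 x] [m3 z] /=|i].
- by split=> // j i.
- move=> [le12 xy] [le23 yz]; split; first exact: leq_trans le23.
  by move=> j i' hj; rewrite yz ?xy //; apply: leq_trans le12.
- exact: conj (leqnSn i) (sw i).
Qed.

Lemma grid_limit_row (w : nat -> grid) :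
  (forall n, same_rows n (w n) (w n.+1)) ->
  forall j i, grid_limit w j i = w j.+1 j i.
Proof.
move=> sw j i; apply: (same_rows_chain sw (n := j.+1)) => //.
by rewrite ltnS leq_maxl.
Qed.

Lemma finite_rows_bound x : finite_rows x ->
  forall k, exists B, forall j i, j < k -> B <= i -> x j i = false.
Proof.
move=> fin; elim=> [|k [B hB]]; first by exists 0.
have [n hn] := fin k; exists (maxn B n) => j i; rewrite ltnS leq_eqVlt geq_max.
by case/orP=> [/eqP -> /andP [_ /hn]|jk /andP [/(hB _ _ jk)]].
Qed.

Lemma nat_dependent_choice (T : Type) (P : T -> Prop) (R : nat -> T -> T -> Prop) t0 :
  P t0 -> (forall n t, P t -> exists2 t', P t' & R n t t') ->
  exists f : nat -> T, f 0 = t0 /\ forall n, P (f n) /\ R n (f n) (f n.+1).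
Proof.
move=> Pt0 hR.
have [g hg] : exists g : nat * T -> T, forall n t, P t -> P (g (n, t)) /\ R n t (g (n, t)).
  have /choice [g hg] : forall nt : nat * T, exists t', P nt.2 -> P t' /\ R nt.1 nt.2 t'.
    move=> [n t]; have [Pt|nPt] := pselect (P t); last by exists t.
    by have [t' Pt' Rt'] := hR n t Pt; exists t'.
  by exists g => n t; exact: (hg (n, t)).
pose f := fix f n := if n is m.+1 then g (m, f m) else t0.
have Pf n : P (f n) by elim: n => [|n IH] //; exact: (hg n _ IH).1.
by exists f; split=> // n; split; [exact: Pf | exact: (hg n _ (Pf n)).2].
Qed.

End Grids.

Section RowSeparation.
Local Open Scope nat_scope.
Variables (G E : nat -> nat -> set grid).
Hypothesis G_open : forall k j, grid_open (G k j).
Hypothesis E_closed : forall k a, grid_closed (E k a).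
Hypothesis E_set_bit : forall k a x i, k < i ->
  E k a (set_bit x k i true) -> ~ E k a (set_bit x k i false).
Hypothesis G_E : forall k x, (forall j, G k j x) -> exists a, E k a x.

Lemma escape_E k a w M : exists x, [/\ same_rows k w x, agree M w x & ~ E k a x].
Proof.
pose i := maxn M k.+1.
have near b : same_rows k w (set_bit w k i b) /\ agree M w (set_bit w k i b).
  split=> [j i' jk|j i' _ i'M]; rewrite /set_bit.
    by have /negbTE -> : j != k by rewrite neq_ltn jk.
  have /negbTE -> : i' != i by rewrite neq_ltn (leq_trans i'M) ?leq_maxl.
  by rewrite andbF.
have [Et|nEt] := pselect (E k a (set_bit w k i true)).
  have [rows ag] := near false; exists (set_bit w k i false); split=> //.
  by apply: E_set_bit Et; rewrite leq_maxr.
by have [rows ag] := near true; exists (set_bit w k i true).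
Qed.

(* Within the closed set of grids with the same first k rows as w0, the
   G_delta set of grids in every G k j is dense in no basic neighbourhood: a
   fusion sequence inside it that avoids E k j at stage j would converge to a
   point of it outside every E k a. *)
Section Stage.
Variables (k : nat) (w0 wI : grid) (MI : nat).
Hypothesis wI_rows : same_rows k w0 wI.
Hypothesis dense : forall w M, same_rows k w0 w -> MI <= M -> agree MI wI w ->
  exists x, [/\ same_rows k w0 x, agree M w x & forall j, G k j x].

Lemma dense_refine j w M : same_rows k w0 w -> MI <= M -> agree MI wI w ->
  exists w' M', [/\ same_rows k w0 w', M < M', agree M w w' &
    forall y, same_rows k w0 y -> agree M' w' y -> G k j y /\ ~ E k j y].
Proof.
move=> w_rows le_M agI.
have [x1 [x1_rows agx1 nEx1]] := escape_E k j w M.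
have [M1 hM1] := E_closed nEx1.
pose M' := maxn M1 M.+1.
have ltM' : M < M' by rewrite leq_maxr.
have agIx1 : agree MI wI x1 by apply: agree_trans agI (agreeW le_M agx1).
have [x2 [x2_rows agx2 Gx2]] :=
  dense (same_rows_trans w_rows x1_rows) (leq_trans le_M (ltnW ltM')) agIx1.
have [M2 hM2] := G_open (Gx2 j).
exists x2, (maxn M2 M'); split=> //.
- exact: leq_trans ltM' (leq_maxr _ _).
- exact: agree_trans agx1 (agreeW (ltnW ltM') agx2).
move=> y _ agy; split; first by apply: hM2; apply: agreeW agy; exact: leq_maxl.
apply: hM1; apply: agreeW (leq_maxl M1 M.+1) _.
by apply: agree_trans agx2 (agreeW (leq_maxr _ _) agy).
Qed.

Lemma Gdelta_not_dense : False.
Proof.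
pose good (s : grid * nat) := [/\ same_rows k w0 s.1, MI <= s.2 & agree MI wI s.1].
have step j s : good s -> exists2 t, good t &
    [/\ s.2 < t.2, agree s.2 s.1 t.1 &
        forall y, same_rows k w0 y -> agree t.2 t.1 y -> G k j y /\ ~ E k j y].
  case: s => w M [w_rows le_M agI].
  have [w' [M' [w'_rows ltM agw' GE]]] := dense_refine j w_rows le_M agI.
  exists (w', M'); split=> //=; first exact: leq_trans le_M (ltnW ltM).
  exact: agree_trans agI (agreeW le_M agw').
have good0 : good (wI, MI) by split=> // j i.
have [s [_ hs]] := nat_dependent_choice good0 step.
pose w n := (s n).1; pose M n := (s n).2.
have leM n : M n <= M n.+1 by have [_ [/ltnW]] := hs n.
have geM n : n <= M n.
  by elim: n => [|n IH] //; apply: leq_ltn_trans IH _; have [_ []] := hs n.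
have agw n : agree (M n) (w n) (w n.+1) by have [_ []] := hs n.
have z_agree := agree_limit geM leM agw.
have z_rows : same_rows k w0 (grid_limit w).
  by move=> j i jk; have [[rows _ _] _] := hs (maxn j i).+1; exact: rows.
have Gz j : G k j (grid_limit w) /\ ~ E k j (grid_limit w).
  by have [_ [_ _]] := hs j; apply=> //; exact: z_agree.
have [a Ea] := G_E (fun j => (Gz j).1).
exact: (Gz a).2 Ea.
Qed.

End Stage.

Lemma avoid_Gdelta k w M : exists w' M',
  [/\ same_rows k w w', M <= M', agree M w w',
      forall i, M' <= i -> w' k i = false &
      forall y, same_rows k.+1 w' y -> agree M' w' y -> ~ forall j, G k j y].
Proof.
have [w1 [M' [w1_rows leM' agw1 notG]]] : exists w1 M',
    [/\ same_rows k w w1, M <= M', agree M w w1 &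
        forall x, same_rows k w x -> agree M' w1 x -> ~ forall j, G k j x].
  apply: contrapT => none; apply: (@Gdelta_not_dense k w w M) => // w1 M' rows le ag.
  apply: contrapT => nox; apply: none; exists w1, M'; split=> // x xr xa Gx.
  by apply: nox; exists x.
pose w' : grid := fun j i => if (j == k) && (M' <= i) then false else w1 j i.
have agw' : agree M' w1 w' by move=> j i _ iM; rewrite /w' leqNgt iM andbF.
have w'_rows : same_rows k w1 w'.
  by move=> j i jk; rewrite /w'; have /negbTE -> : j != k by rewrite neq_ltn jk.
exists w', M'; split=> //.
- exact: same_rows_trans w1_rows w'_rows.
- exact: agree_trans agw1 (agreeW leM' agw').
- by move=> i iM; rewrite /w' eqxx iM.
move=> y yr ya; apply: notG; last exact: agree_trans agw' ya.
by apply: same_rows_trans w1_rows (same_rows_trans w'_rows _) => j i /ltnW /yr.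
Qed.

Theorem exists_finite_rows_notin_Gdeltas :
  exists2 x, finite_rows x & forall k, ~ forall j, G k j x.
Proof.
have step k (s : grid * nat) : True -> exists2 t : grid * nat, True &
    [/\ same_rows k s.1 t.1, s.2 <= t.2, agree s.2 s.1 t.1,
        forall i, t.2 <= i -> t.1 k i = false &
        forall y, same_rows k.+1 t.1 y -> agree t.2 t.1 y -> ~ forall j, G k j y].
  by move=> _; have [w' [M' ?]] := avoid_Gdelta k s.1 s.2; exists (w', M').
have [s [_ hs]] := nat_dependent_choice (t0 := (fun _ _ => false, 0)) I step.
pose w n := (s n).1; pose M n := (s n).2.
have w_rows n : same_rows n (w n) (w n.+1) by have [_ []] := hs n.
have leM n : M n <= M n.+1 by have [_ []] := hs n.
have agw n : agree (M n) (w n) (w n.+1) by have [_ []] := hs n.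
exists (grid_limit w) => [j|k].
  exists (M j.+1) => i iM; rewrite grid_limit_row //.
  by have [_ [_ _ _ + _]] := hs j; apply.
have z_rows : same_rows k.+1 (w k.+1) (grid_limit w).
  by move=> j i jk; rewrite grid_limit_row // (same_rows_chain w_rows jk i (ltnSn j)).
have z_agree : agree (M k.+1) (w k.+1) (grid_limit w).
  move=> j i jM iM; rewrite grid_limit_row //; have [jk|kj] := ltnP j k.+1.
    exact: (same_rows_chain w_rows jk i (ltnSn j)).
  exact: (agree_chain leM agw (leqW kj)).2.
by have [_ [_ _ _ _]] := hs k; apply.
Qed.

End RowSeparation.

Lemma Sigma03_preimage (X : Type) (B : set (set X)) (Y : set X) (f : grid -> X) :
  (forall x, Y (f x)) -> (forall U, gen_open B Y U -> grid_open (f @^-1` U)) ->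
  forall U, Sigma0 B Y 3 U -> exists G : nat -> nat -> set grid,
    (forall k j, grid_open (G k j)) /\ forall x, U (f x) <-> exists k, forall j, G k j x.
Proof.
move=> Yf f_cont U [F [hF ->]].
have /choice [H hH] : forall k, exists H : nat -> set X,
    (forall j, H j `<=` Y /\ gen_open B Y (Y `\` H j)) /\ Y `\` F k = \bigcup_j H j.
  by move=> k; have [_ [H hH]] := hF k; exists H.
exists (fun k j => f @^-1` (Y `\` H k j)); split=> [k j|x].
  by apply: f_cont; have [/(_ j) []] := hH k.
split=> [[k _ Fx]|[k Gk]]; exists k => //.
  move=> j; split=> [|Hx]; first exact: Yf.
  have : (Y `\` F k) (f x) by have [_ ->] := hH k; exists j.
  by case.
apply: contrapT => nFx; have : (Y `\` F k) (f x) by [].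
by have [_ ->] := hH k; case=> j _; apply: (Gk j).2.
Qed.

Lemma denq_dvdn (x : rat) (d z : nat) : x * d%:R = z%:R -> (`|denq x| %| d)%N.
Proof.
move=> xd.
have : numq x * d%:Z = z%:Z * denq x.
  have natz n : (n%:Z)%:~R = n%:R :> rat by [].
  by apply/eqP; rewrite -(eqr_int rat) !intrM numqE !natz -xd mulrAC.
move=> /(congr1 absz); rewrite !abszM /= => eq_abs.
have : (`|denq x| %| `|numq x| * d)%N by rewrite eq_abs dvdn_mull.
by rewrite Gauss_dvdr // coprime_sym coprime_num_den.
Qed.

Section PruferRationals.
Variables (p : nat) (p_prime : prime p).

Definition prufer_exp (q : rat) := logn p `|denq q|.
Definition prufer_num (q : rat) := `|numq q|%N.

Lemma prufer_denE q : in_prufer p q -> denq q = (p ^ prufer_exp q)%N%:Z.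
Proof. by move=> [_ [_ [k den_q]]]; rewrite /prufer_exp den_q /= pfactorK. Qed.

Lemma prufer_numE q : in_prufer p q -> numq q = (prufer_num q)%:Z.
Proof. by move=> [q_ge0 _]; rewrite /prufer_num gez0_abs // numq_ge0. Qed.

Lemma prufer_scale q K : in_prufer p q -> (prufer_exp q <= K)%N ->
  q * (p ^ K)%:R = (prufer_num q * p ^ (K - prufer_exp q))%:R.
Proof.
move=> Tq le; rewrite -{1}(divq_num_den q) prufer_numE // prufer_denE //.
rewrite -(subnK le) expnD !natrM subnK //.
have p_neq0 : ((p ^ prufer_exp q)%N%:R : rat) != 0.
  by rewrite pnatr_eq0 expn_eq0 negb_and -lt0n prime_gt0.
by rewrite !pmulrn; field.
Qed.

Lemma prufer_add_carry q r : in_prufer p q -> in_prufer p r ->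
  exists d : nat, [/\ 0 <= prufer_add q r, prufer_add q r < 1 &
                     prufer_add q r + d%:R = q + r].
Proof.
move=> [q0 [q1 _]] [r0 [r1 _]]; rewrite /prufer_add; case: ifP => [lt1|].
  by exists 0%N; rewrite addr0 addr_ge0.
by move=> /negbT; rewrite -leNgt => ge1; exists 1%N; rewrite subr_ge0 subrK; split=> //; lra.
Qed.

Lemma prufer_addP q r : in_prufer p q -> in_prufer p r ->
  let s := prufer_add q r in let K := (prufer_exp q + prufer_exp r)%N in
  [/\ in_prufer p s, (prufer_exp s <= K)%N &
      exists d : nat, (prufer_num s * p ^ (K - prufer_exp s) + d * p ^ K =
        prufer_num q * p ^ (K - prufer_exp q) + prufer_num r * p ^ (K - prufer_exp r))%N].
Proof.
move=> Tq Tr s K.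
have [d [s0 s1 sd]] := prufer_add_carry Tq Tr.
pose Iq := (prufer_num q * p ^ (K - prufer_exp q))%N.
pose Ir := (prufer_num r * p ^ (K - prufer_exp r))%N.
have sKd : s * (p ^ K)%:R + (d * p ^ K)%N%:R = (Iq + Ir)%N%:R.
  rewrite natrM natrD -prufer_scale ?leq_addr // -prufer_scale ?leq_addl //.
  by rewrite -!mulrDl sd.
have le_dK : (d * p ^ K <= Iq + Ir)%N.
  by rewrite -(ler_nat rat) -sKd lerDr mulr_ge0 ?ler0n.
have sK : s * (p ^ K)%:R = (Iq + Ir - d * p ^ K)%N%:R by rewrite natrB // -sKd addrK.
have [j le_jK den_s] := dvdn_pfactor _ _ p_prime (denq_dvdn sK).
have Ts : in_prufer p s.
  by split=> //; split=> //; exists j; rewrite -den_s gtz0_abs // denq_gt0.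
have exp_s : prufer_exp s = j by rewrite /prufer_exp den_s pfactorK.
split=> //; first by rewrite exp_s.
exists d; apply/eqP; rewrite -(eqr_nat rat) natrD -prufer_scale ?exp_s //.
by rewrite sK -natrD subnK.
Qed.

Definition prufer_unit (k : nat) : rat := ((p ^ k.+1)%N%:R)^-1.

Lemma prufer_unitP k :
  [/\ in_prufer p (prufer_unit k), prufer_exp (prufer_unit k) = k.+1 &
      prufer_num (prufer_unit k) = 1%N].
Proof.
have p_gt1 : (1 < p ^ k.+1)%N by rewrite -{1}(expn0 p) ltn_exp2l ?prime_gt1.
have den_u : denq (prufer_unit k) = (p ^ k.+1)%N%:Z.
  by have := @denqVz (p ^ k.+1)%N%:Z; rewrite eqz_nat -lt0n => /(_ (ltnW p_gt1)).
have Tu : in_prufer p (prufer_unit k).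
  split; first by rewrite invr_ge0 ler0n.
  split; last by exists k.+1.
  by rewrite invf_lt1 ?ltr0n ?ltr1n // (ltnW p_gt1).
have exp_u : prufer_exp (prufer_unit k) = k.+1 by rewrite /prufer_exp den_u /= pfactorK.
split=> //; apply/eqP; rewrite -(eqr_nat rat).
have := prufer_scale Tu (leqnn _); rewrite subnn expn0 muln1 exp_u => <-.
by rewrite mulVf // pnatr_eq0 -lt0n (ltnW p_gt1).
Qed.

End PruferRationals.

Lemma subr3_rearrange (V : zmodType) (us uq ur vs vq vr ws wq wr d : V) :
  wq + wr = ws + d ->
  (us + vs + ws) - (uq + vq + wq) - (ur + vr + wr) - (vs - vq - vr) = us - uq - ur - d.
Proof.
have sub_add (a b c d' : V) : (a + b) - (c + d') = (a - c) + (b - d') by rewrite opprD addrACA.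
move=> wqr; rewrite (sub_add (us + vs)) (sub_add us) (sub_add (us - uq + (vs - vq))).
rewrite (sub_add (us - uq)) (addrAC _ (ws - wq - wr)) addrK.
by congr (_ + _); rewrite -addrA -opprD wqr opprD addrA subrr add0r.
Qed.

Section Construction.
Variables (p : nat) (p_prime : prime p) (A : zmodType) (e : nat -> A).
Hypothesis e_pomega : forall i, pomega p (e i *+ p ^ i.+1).

Local Notation K := (prufer_exp p).
Local Notation N := prufer_num.

Definition column_code (x : grid) i : nat := (\sum_(j < i) x j i * p ^ j)%N.

Definition series_term x k i : A :=
  if (k <= i)%N then e i *+ (column_code x i * p ^ (i.+1 - k)) else 0.

Definition partial_sum x k m := \sum_(i < m) series_term x k i.

Definition phi x : Hcar A := fun q =>
  if pselect (in_prufer p q) then Lseq p (fun n => partial_sum x (K q) (n + K q) *+ N q)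
  else Lzero p.

Lemma phi_in x q : in_prufer p q ->
  phi x q = Lseq p (fun n => partial_sum x (K q) (n + K q) *+ N q).
Proof. by rewrite /phi; case: pselect. Qed.

Lemma phi_out x q : ~ in_prufer p q -> phi x q = Lzero p.
Proof. by rewrite /phi; case: pselect. Qed.

Lemma pomega_e i m : (p ^ i.+1 %| m)%N -> pomega p (e i *+ m).
Proof. by move=> /dvdnP [c ->] n; rewrite mulnC mulrnA; exact/pmulAMn/e_pomega. Qed.

Lemma series_term_tail x k n i : (n + k <= i)%N -> pmulA p n (series_term x k i).
Proof.
move=> le; rewrite /series_term ifT; last by lia.
by apply: pmulA_dvdn; apply: dvdn_mull; rewrite dvdn_exp2l //; lia.
Qed.

Lemma partial_sumB x k m1 m2 : (m1 <= m2)%N ->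
  partial_sum x k m2 - partial_sum x k m1 = \sum_(m1 <= i < m2) series_term x k i.
Proof.
move=> le; rewrite /partial_sum -!(big_mkord xpredT).
by rewrite (big_cat_nat (leq0n m1) le) /= addrAC subrr add0r.
Qed.

Lemma partial_sum_cauchy x k n m1 m2 : (n + k <= m1 <= m2)%N ->
  pmulA p n (partial_sum x k m2 - partial_sum x k m1).
Proof.
move=> /andP [le1 le2]; rewrite partial_sumB // big_nat_cond.
apply: pmulA_sum => i /andP [/andP [le_i _] _].
by apply: series_term_tail; exact: leq_trans le_i.
Qed.

Lemma partial_sum_shift x k k' n : (k <= k')%N ->
  partial_sum x k (n + k') = partial_sum x k k' + partial_sum x k' (n + k') *+ p ^ (k' - k).
Proof.
move=> le; rewrite /partial_sum -sumrMnl.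
rewrite (@big_ord_widen _ _ _ k' (n + k') (series_term x k)) ?leq_addl //.
rewrite [X in _ = X + _]big_mkcond /= -big_split /=; apply: eq_bigr => i _.
have [lt_ik'|le_k'i] := ltnP i k'.
  by rewrite /series_term [in X in _ = _ + X]ifF ?mul0rn ?addr0 // ltn_geF.
rewrite add0r /series_term ifT; last exact: leq_trans le_k'i.
rewrite ifT // -mulrnA -mulnA -expnD; congr (_ *+ (_ * p ^ _)); lia.
Qed.

Lemma partial_sum_pmul x k n : pmulA p n (partial_sum x k (n + k) *+ p ^ k).
Proof.
rewrite /partial_sum -sumrMnl; apply: pmulA_sum => i _; rewrite /series_term.
case: ifP => le; last by rewrite mul0rn; exact: pmulA0.
rewrite -mulrnA; apply: pomega_e.
by rewrite -mulnA -expnD; apply: dvdn_mull; rewrite dvdn_exp2l //; lia.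
Qed.

Definition cocycle_value x q r : A :=
  let s := prufer_add q r in let k := (K q + K r)%N in
  partial_sum x (K s) k *+ N s - partial_sum x (K q) k *+ N q - partial_sum x (K r) k *+ N r.

Lemma cocycle_phi x q r : in_prufer p q -> in_prufer p r ->
  cocycle (phi x) q r = kappa p (cocycle_value x q r).
Proof.
move=> Tq Tr; have [Ts leK [d eq_d]] := prufer_addP p_prime Tq Tr.
rewrite /cocycle !phi_in // !Lsub_Lseq kappa_Lseq /cocycle_value; apply/Lseq_eq => n.
set k := (K q + K r)%N in leK eq_d *.
set W := partial_sum x k (n + k).
have split_at k' M : (k' <= k)%N -> exists2 u, pmulA p n u &
    partial_sum x k' (n + k') *+ M = u + partial_sum x k' k *+ M + W *+ (M * p ^ (k - k')).
  move=> le; exists ((partial_sum x k' (n + k') - (partial_sum x k' k + W *+ p ^ (k - k'))) *+ M).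
    apply/pmulAMn; rewrite -partial_sum_shift // -opprB; apply/pmulAN.
    by apply: partial_sum_cauchy; rewrite leqnn leq_add2l.
  by rewrite mulnC mulrnA -!mulrnDl -addrA subrK.
have [us ps ->] := split_at _ (N (prufer_add q r)) leK.
have [uq pq ->] := split_at _ (N q) (leq_addr _ _).
have [ur pr ->] := split_at _ (N r) (leq_addl _ _).
rewrite (@subr3_rearrange _ _ _ _ _ _ _ _ _ _ (W *+ (d * p ^ k))); last by rewrite -!mulrnDr eq_d.
apply: pmulAB; first by apply: pmulAB; [apply: pmulAB|].
by rewrite mulnC mulrnA; apply/pmulAMn/partial_sum_pmul.
Qed.

Lemma in_prufer0 : in_prufer p 0.
Proof. by split=> //; split=> //; exists 0%N. Qed.

Lemma phi_HatH x : HatH A p (phi x).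
Proof.
split; [|split; [|split]].
- move=> q Tq; rewrite phi_in //; apply: isL_Lseq => n; rewrite -mulrnBl addSn.
  by apply/pmulAMn/partial_sum_cauchy; rewrite leqnn leqW.
- by move=> q /phi_out.
- rewrite phi_in; last exact: in_prufer0.
  by rewrite Lzero_Lseq; apply/Lseq_eq => n; rewrite /prufer_num (_ : numq 0 = 0) // mulr0n subrr; exact: pmulA0.
- by move=> q r Tq Tr; exists (cocycle_value x q r); apply: cocycle_phi.
Qed.

Lemma column_code_agree x y M i : agree M x y -> (i < M)%N ->
  column_code x i = column_code y i.
Proof. by move=> xy iM; apply: eq_bigr => j _; rewrite xy // (ltn_trans _ iM). Qed.

Lemma partial_sum_agree x y M k m : agree M x y -> (m <= M)%N ->
  partial_sum x k m = partial_sum y k m.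
Proof.
move=> xy mM; apply: eq_bigr => i _.
by rewrite /series_term (column_code_agree xy) // (leq_trans _ mM).
Qed.

Lemma phi_agree x y M q n : agree M x y -> (n + K q <= M)%N -> phi x q n = phi y q n.
Proof.
move=> xy le; rewrite /phi; case: pselect => // Tq.
by rewrite /Lseq /= (partial_sum_agree _ xy le).
Qed.

Lemma phi_eq_closed q c : grid_closed [set x | phi x q = c].
Proof.
move=> x /= neq; have [n neq_n] : exists n, phi x q n <> c n.
  by apply: contra_notP neq => eq_n; apply: funext => n; apply: contra_notP eq_n; exists n.
by exists (n + K q)%N => y xy eq_y; apply: neq_n; rewrite (phi_agree xy) // eq_y.
Qed.

Lemma subbasis_continuous x V : Hsubbasis A p V -> V (phi x) ->
  exists M, forall y, agree M x y -> V (phi y).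
Proof.
case=> [[q [n [c [Tq ->]]]]|[q [r [a [Tq [Tr ->]]]]]] /= Vx.
  by exists (n + K q)%N => y xy; rewrite -(phi_agree xy).
exists (K q + K r)%N => y xy; rewrite cocycle_phi // -Vx cocycle_phi //.
by rewrite /cocycle_value !(partial_sum_agree _ xy).
Qed.

Lemma phi_continuous U : gen_open (Hsubbasis A p) (HatH A p) U -> grid_open (phi @^-1` U).
Proof.
move=> [_ hU] x Ux; have [s [hs sU]] := hU _ Ux.
suff [M hM] : exists M, forall y, agree M x y -> forall V, V \in s -> V (phi y).
  by exists M => y xy; apply: sU; split; [exact: phi_HatH | exact: hM].
elim: s hs {sU} => [|V s IH] hs; first by exists 0%N.
have [M1 h1] := subbasis_continuous (hs V (mem_head _ _)).1 (hs V (mem_head _ _)).2.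
have [M2 h2] := IH (fun W hW => hs W (mem_behead (s := V :: s) hW)).
exists (maxn M1 M2) => y xy W; rewrite inE => /orP [/eqP ->|hW].
  by apply: h1; apply: agreeW xy; apply: leq_maxl.
by apply: h2 => //; apply: agreeW xy; apply: leq_maxr.
Qed.

Lemma phi_NH x : finite_rows x -> NH A p (phi x).
Proof.
move=> fin; split; first exact: phi_HatH.
move=> q Tq; rewrite phi_in //; set k := K q.
have [B hB] := finite_rows_bound fin k; set B' := maxn B k.
have tail_pomega i : (B' <= i)%N -> pomega p (series_term x k i).
  rewrite geq_max => /andP [Bi ki]; rewrite /series_term ki; apply: pomega_e.
  have /dvdnP [c ->] : (p ^ k %| column_code x i)%N.
    apply: dvdn_sum => j _; have [jk|kj] := ltnP j k; first by rewrite hB.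
    by apply: dvdn_mull; rewrite dvdn_exp2l.
  by rewrite -mulnA -expnD subnKC ?dvdn_mull // (leq_trans ki).
exists (partial_sum x k B' *+ N q); rewrite kappa_Lseq; apply/Lseq_eq => n.
rewrite -mulrnBl; apply: pmulAMn; set m := maxn (n + k) B'.
have -> : partial_sum x k (n + k) - partial_sum x k B'
    = (partial_sum x k (n + k) - partial_sum x k m) + (partial_sum x k m - partial_sum x k B').
  by rewrite addrA subrK.
apply: pmulAD.
  by rewrite -opprB; apply/pmulAN/partial_sum_cauchy; rewrite leqnn leq_maxl.
rewrite partial_sumB ?leq_maxr // big_nat_cond; apply: pmulA_sum => i.
by case/andP=> /andP [Bi _] _; exact: tail_pomega.
Qed.

Lemma column_code_set_bit_other x k i b j : j != i ->
  column_code (set_bit x k i b) j = column_code x j.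
Proof. by move=> ji; apply: eq_bigr => l _; rewrite /set_bit (negbTE ji) andbF. Qed.

Lemma column_code_set_bit x k i : (k < i)%N ->
  column_code (set_bit x k i true) i = (column_code (set_bit x k i false) i + p ^ k)%N.
Proof.
move=> ki; rewrite /column_code (bigD1 (Ordinal ki)) //= [in RHS](bigD1 (Ordinal ki)) //=.
rewrite /set_bit !eqxx /= mul1n mul0n add0n addnC; congr (_ + _)%N.
apply: eq_bigr => j jk; have /negbTE -> // : (j : nat) != k.
by apply: contra jk => /eqP jk; apply/eqP/val_inj.
Qed.

Lemma partial_sum_set_bit x k i m : (k < i < m)%N ->
  partial_sum (set_bit x k i true) k.+1 m - partial_sum (set_bit x k i false) k.+1 m
    = e i *+ p ^ i.
Proof.
case/andP=> ki im; rewrite /partial_sum -sumrB (bigD1 (Ordinal im)) //= big1 ?addr0.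
  rewrite /series_term !ifT // column_code_set_bit // mulnDl mulrnDr addrAC subrr add0r.
  by rewrite -expnD; congr (_ *+ p ^ _); lia.
move=> j ji; rewrite /series_term !column_code_set_bit_other //.
by case: ifP; rewrite subrr.
Qed.

Lemma phi_unit x k : phi x (prufer_unit p k) = Lseq p (partial_sum x k.+1 \o addn^~ k.+1).
Proof.
have [Tu exp_u num_u] := prufer_unitP p_prime k.
by rewrite phi_in // exp_u num_u; congr (Lseq p _); apply: funext => n; exact: mulr1n.
Qed.

Hypothesis e_not_pomega : forall i, ~ pomega p (e i *+ p ^ i).

Lemma phi_unit_set_bit x k i : (k < i)%N ->
  phi (set_bit x k i true) (prufer_unit p k) <> phi (set_bit x k i false) (prufer_unit p k).
Proof.
move=> ki; rewrite !phi_unit => /Lseq_eq eq_phi.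
suff : pomega p (e i *+ p ^ i) by exact: e_not_pomega.
move=> n.
apply: (pmulAW (leq_maxl n i)); have := eq_phi (maxn n i).
by rewrite /= partial_sum_set_bit //; apply/andP; split=> //; lia.
Qed.

End Construction.

Section ReducedPGroups.
Variables (p : nat) (p_prime : prime p) (A : zmodType).
Hypothesis A_p : is_p_group A p.

Lemma p_group_coprime_inv (d : A) u : coprime p u -> exists v, d *+ (v * u) = d.
Proof.
rewrite coprime_sym => up; have [s ds] := A_p d.
have u_gt0 : (0 < u)%N.
  by case: u up => //; rewrite /coprime gcd0n => /eqP p1; move: (prime_gt1 p_prime); rewrite p1.
have [km kn eq_k _] := egcdnP (p ^ s) u_gt0.
rewrite (eqnP (coprimeXr s up)) in eq_k.
by exists km; rewrite eq_k mulrnDr mulnC mulrnA ds mul0rn add0r.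
Qed.

(* If p^n A lies in p^w A, elements of p^n A have p-th roots in p^n A, while
   integers prime to p act invertibly on any p-group. *)
Lemma pmulA_divisible n : (forall b : A, pomega p (b *+ p ^ n)) ->
  is_divisible_subset (@pmulA A p n).
Proof.
move=> all_pomega.
have root_pow j (d : A) : pmulA p n d -> exists2 d', pmulA p n d' & d' *+ p ^ j = d.
  elim: j d => [|j IH] d dn; first by exists d; rewrite ?expn0 ?mulr1n.
  have [d1 [c ->] <-] := IH d dn; have [c' ->] := all_pomega c n.+1.
  by exists (c' *+ p ^ n); [exists c' | rewrite -!mulrnA -!expnD addnS addSn].
move=> d dn m m_gt0.
have [u pu eq_m] := pfactor_coprime p_prime m_gt0.
set j := logn p m in eq_m; have [d' d'n <-] := root_pow j d dn.
have [v vu] := p_group_coprime_inv d' pu.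
by exists (d' *+ v); [exact: pmulAMn | rewrite eq_m -mulrnA mulnA mulrnA vu].
Qed.

Hypotheses (A_reduced : is_reduced A) (A_unbounded : ~ is_bounded A).

Lemma unbounded_not_pomega n : exists b : A, ~ pomega p (b *+ p ^ n).
Proof.
apply: contrapT => none.
have all_pomega (b : A) : pomega p (b *+ p ^ n) by apply: contrapT => nb; apply: none; exists b.
apply: A_unbounded; exists (p ^ n)%N; split; first by rewrite expn_gt0 prime_gt0.
move=> a; apply: (A_reduced _ (pmulA_divisible all_pomega)); last by exists a.
by split; [exact: pmulA0 | move=> x y; exact: pmulAB].
Qed.

Lemma exists_pomega_step n : exists e : A, pomega p (e *+ p ^ n.+1) /\ ~ pomega p (e *+ p ^ n).
Proof.
have [b nb] := unbounded_not_pomega n; have [s bs] := A_p b.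
suff : pomega p (b *+ p ^ (n + s)).
  elim: s {bs} => [|m IH]; first by rewrite addn0.
  have [bm|nbm] := pselect (pomega p (b *+ p ^ (n + m))); first by move=> _; exact: IH.
  move=> bm1; exists (b *+ p ^ m).
  by rewrite -!mulrnA -!expnD !(addnC m) addSn -addnS.
by rewrite expnD mulnC mulrnA bs mul0rn => k; exact: pmulA0.
Qed.

Lemma exists_pomega_witnesses : exists e : nat -> A,
  (forall i, pomega p (e i *+ p ^ i.+1)) /\ forall i, ~ pomega p (e i *+ p ^ i).
Proof.
have /choice [e he] := exists_pomega_step.
by exists e; split=> i; have [] := he i.
Qed.

End ReducedPGroups.

Section LowerBound.
Variables (p : nat) (p_prime : prime p) (A : countZmodType) (e : nat -> A).
Hypothesis e_pomega : forall i, pomega p (e i *+ p ^ i.+1).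
Hypothesis e_not_pomega : forall i, ~ pomega p (e i *+ p ^ i).

Lemma NH_not_Sigma03 : ~ Sigma0 (Hsubbasis A p) (HatH A p) 3 (NH A p).
Proof.
move=> /(Sigma03_preimage (phi_HatH p_prime e_pomega) (phi_continuous p_prime e_pomega)).
move=> [G [G_open NH_G]].
pose E k n : set grid := fun x =>
  if unpickle n is Some b then phi p e x (prufer_unit p k) = kappa p b else False.
have [x fin notG] : exists2 x, finite_rows x & forall k, ~ forall j, G k j x.
  apply: (@exists_finite_rows_notin_Gdeltas G E G_open).
  - by move=> k n; rewrite /E; case: unpickle => [b|]; [exact: phi_eq_closed | exists 0%N].
  - move=> k n x i ki; rewrite /E; case: unpickle => // b eq1 eq0.
    exact: (phi_unit_set_bit p_prime e_not_pomega ki (etrans eq1 (esym eq0))).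
  - move=> k x /(ex_intro _ k) /NH_G [_ inK].
    have [Tu _ _] := prufer_unitP p_prime k; have [b eq_b] := inK _ Tu.
    by exists (pickle b); rewrite /E pickleK.
have [k Gk] := (NH_G x).1 (phi_NH p_prime e_pomega fin).
exact: notG Gk.
Qed.

End LowerBound.

Theorem lemma4p13 (p : nat) (A : countZmodType) :
  prime p ->
  is_p_group A p -> is_reduced A -> ~ is_bounded A ->
  Pi0 (Hsubbasis A p) (HatH A p) 3 (NH A p) /\
  ~ Sigma0 (Hsubbasis A p) (HatH A p) 3 (NH A p).
Proof.
move=> p_prime A_p A_reduced A_unbounded; split; first exact: NH_Pi03.
have [e [e_pomega e_not_pomega]] := exists_pomega_witnesses p_prime A_p A_reduced A_unbounded.
exact: NH_not_Sigma03 e_pomega e_not_pomega.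
Qed.
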